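(* If $\mathcal{T}^{\mathrm{Exp}(\mu)}\geq_{\mathrm{st}}\mathcal{T}$ for all $\mu\in(0,\infty)$, then $\overline{F}(0)=1$.
   Context: Standing assumptions: $\mathcal{T}$ is a probability law on the Borel sets of $[0,\infty]$ with $\mathcal{T}((0,\infty])>0$ and $\inf\mathrm{supp}(\mathcal{T})=0$; $\overline{F}(t):=\mathcal{T}((t,\infty])$. For $\mu>0$: let $(T_k)$ be i.i.d. with law $\mathcal{T}$ and $(R_k)$ an independent i.i.d. sequence of exponential random variables with mean $\mu^{-1}$; $\mathcal{T}^{\mathrm{Exp}(\mu)}$ is the law of $\tilde T$ defined a.s. by $\tilde T=R_1+\cdots+R_{k-1}+T_k$ on $\{R_1<T_1,\ldots,R_{k-1}<T_{k-1},T_k\leq R_k\}$, $k\in\mathbb{N}$. $\mathcal{A}\geq_{\mathrm{st}}\mathcal{B}$ means $\mathcal{A}((t,\infty])\geq\mathcal{B}((t,\infty])$ for all $t\in[0,\infty)$. *)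

From Stdlib Require Import Reals.
Open Scope R_scope.

Definition set (X : Type) := X -> Prop.

(* Extended reals R ∪ {+oo}: Some x = x, None = +oo. *)
Definition ext := option R.

Definition ext_gt (t : R) : set ext :=
  fun y => match y with Some x => t < x | None => True end.

Definition ext_le_R (y : ext) (r : R) : Prop :=
  match y with Some x => x <= r | None => False end.

Definition ext_lt_R (y : ext) (r : R) : Prop :=
  match y with Some x => x < r | None => False end.

Definition ext_nonneg (y : ext) : Prop :=
  match y with Some x => 0 <= x | None => True end.

Record sigma_algebra {X : Type} (S : set (set X)) : Prop := {
  sa_full : S (fun _ => True);
  sa_compl : forall A, S A -> S (fun x => ~ A x);
  sa_union : forall A : nat -> set X, (forall n, S (A n)) ->
               S (fun x => exists n, A n x) }.

Definition generated {X : Type} (G : set (set X)) : set (set X) :=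
  fun A => forall S, sigma_algebra S -> (forall B, G B -> S B) -> S A.

Definition borel_ext : set (set ext) :=
  generated (fun A => exists t : R, A = ext_gt t).
Definition borel_R : set (set R) :=
  generated (fun A => exists t : R, A = (fun x => t < x)).

Record probability {X : Type} (S : set (set X)) (P : set X -> R) : Prop := {
  pr_sa : sigma_algebra S;
  pr_nonneg : forall A, S A -> 0 <= P A;
  pr_full : P (fun _ => True) = 1;
  pr_sigma_add : forall A : nat -> set X, (forall n, S (A n)) ->
     (forall m n x, m <> n -> A m x -> A n x -> False) ->
     Un_cv (fun N => sum_f_R0 (fun n => P (A n)) N) (P (fun x => exists n, A n x)) }.

(* T is a probability law on the Borel sets of [0, +oo]
   (a Borel probability on R ∪ {+oo} giving no mass to (-oo,0)) *)
Definition law_on_0_inf (T : set ext -> R) : Prop :=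
  probability borel_ext T /\
  T (fun y => match y with Some x => x < 0 | None => False end) = 0.

Definition Fbar (T : set ext -> R) (t : R) : R := T (ext_gt t).

Definition in_support (T : set ext -> R) (y : ext) : Prop :=
  match y with
  | Some x => forall eps, 0 < eps ->
      0 < T (fun z => match z with Some w => Rabs (w - x) < eps | None => False end)
  | None => forall M : R, 0 < T (ext_gt M)
  end.

Definition inf_support_is_0 (T : set ext -> R) : Prop :=
  (forall y, in_support T y -> ext_nonneg y) /\
  (forall eps, 0 < eps -> exists y, in_support T y /\ ext_lt_R y eps).

Definition has_law {Om E : Type} (F : set (set Om)) (P : set Om -> R)
    (B : set (set E)) (X : Om -> E) (Q : set E -> R) : Prop :=
  (forall A, B A -> F (fun w => A (X w))) /\
  (forall A, B A -> P (fun w => A (X w)) = Q A).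

Definition is_exponential {Om : Type} (F : set (set Om)) (P : set Om -> R)
    (mu : R) (X : Om -> R) : Prop :=
  (forall A, borel_R A -> F (fun w => A (X w))) /\
  (forall r, r < 0 -> P (fun w => r < X w) = 1) /\
  (forall r, 0 <= r -> P (fun w => r < X w) = exp (- (mu * r))).

Fixpoint prodR (n : nat) (f : nat -> R) : R :=
  match n with O => 1 | S m => prodR m f * f m end.

Fixpoint sumR (n : nat) (f : nat -> R) : R :=
  match n with O => 0 | S m => sumR m f + f m end.

Definition indep_family {Om : Type} (P : set Om -> R)
    (Tk : nat -> Om -> ext) (Rk : nat -> Om -> R) : Prop :=
  forall (n : nat) (A : nat -> set ext) (B : nat -> set R),
    (forall k, borel_ext (A k)) -> (forall k, borel_R (B k)) ->
    P (fun w => forall k, (k < n)%nat -> A k (Tk k w) /\ B k (Rk k w)) =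
    prodR n (fun k => P (fun w => A k (Tk k w)) * P (fun w => B k (Rk k w))).

(* The event {R_1<T_1,...,R_{k-1}<T_{k-1}, T_k <= R_k} (0-based indices here) *)
Definition stop_event {Om : Type} (Tk : nat -> Om -> ext) (Rk : nat -> Om -> R)
    (k : nat) (w : Om) : Prop :=
  (forall j, (j < k)%nat -> ext_gt (Rk j w) (Tk j w)) /\ ext_le_R (Tk k w) (Rk k w).

(* The event {Ttilde > t}, where Ttilde = R_1+...+R_{k-1}+T_k on the k-th stop event *)
Definition Ttilde_gt {Om : Type} (Tk : nat -> Om -> ext) (Rk : nat -> Om -> R)
    (t : R) (w : Om) : Prop :=
  exists k, stop_event Tk Rk k w /\
    match Tk k w with
    | Some x => t < sumR k (fun j => Rk j w) + x
    | None => False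
    end.

From Stdlib Require Import Reals Lra Lia Classical FunctionalExtensionality PropExtensionality.
Open Scope R_scope.

(* If b := Fbar(0) < 1, the law T has an atom of mass 1 - b at 0.  Take mu = 1,
   e := exp(-t) and a := Fbar(t).  The restarted time is at most t on each of the
   disjoint events  T_0 <= t < R_0,  T_0 = 0 < R_0 <= t,  and  R_0 <= t < T_0 with
   T_1 = 0 < R_1,  of total probability (1-a)e + (1-b)(1-e) + a(1-e)(1-b).  Hence
   P(Ttilde > t) <= a e + (1-e)(b - a(1-b)), which is < a as soon as a(2-b) > b;
   since a -> b as t -> 0+ and b(2-b) > b, this happens for small t. *)

Lemma set_ext {X : Type} (A B : set X) : (forall x, A x <-> B x) -> A = B.
Proof.
intro H; apply functional_extensionality; intro x.
apply propositional_extensionality, H.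
Qed.

Section SigmaAlgebra.
Context {X : Type} {S : set (set X)}.
Hypothesis HS : sigma_algebra S.

Lemma sa_ext (A B : set X) : S A -> (forall x, A x <-> B x) -> S B.
Proof. intros HA H; rewrite <- (set_ext A B H); exact HA. Qed.

Lemma sa_compl_iff (A B : set X) : S A -> (forall x, ~ A x <-> B x) -> S B.
Proof. intro HA; apply sa_ext, (sa_compl _ HS), HA. Qed.

Lemma sa_empty : S (fun _ => False).
Proof. apply (sa_compl_iff _ _ (sa_full _ HS)); tauto. Qed.

Lemma sa_prop (Q : Prop) : S (fun _ => Q).
Proof.
destruct (classic Q).
- apply (sa_ext _ _ (sa_full _ HS)); tauto.
- apply (sa_ext _ _ sa_empty); tauto.
Qed.

Lemma sa_union2 (A B : set X) : S A -> S B -> S (fun x => A x \/ B x).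
Proof.
intros HA HB.
apply (sa_ext (fun x => exists n, (match n with O => A | _ => B end) x)).
- apply (sa_union _ HS); intros [|n]; assumption.
- intro x; split.
  + intros [[|n] Hn]; auto.
  + intros [h|h]; [exists O | exists 1%nat]; assumption.
Qed.

Lemma sa_inter (A B : set X) : S A -> S B -> S (fun x => A x /\ B x).
Proof.
intros HA HB; apply (sa_compl_iff (fun x => ~ A x \/ ~ B x)).
- apply sa_union2; apply (sa_compl _ HS); assumption.
- intro x; tauto.
Qed.

Lemma sa_inter_count (A : nat -> set X) :
  (forall n, S (A n)) -> S (fun x => forall n, A n x).
Proof.
intro HA; apply (sa_compl_iff (fun x => exists n, ~ A n x)).
- apply (sa_union _ HS); intro n; apply (sa_compl _ HS), HA.
- intro x; split.
  + intros h n; apply NNPP; intro hn; apply h; exists n; exact hn.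
  + intros h [n hn]; exact (hn (h n)).
Qed.

Lemma sa_impl (Q : Prop) (A : set X) : S A -> S (fun x => Q -> A x).
Proof.
intro HA; destruct (classic Q).
- apply (sa_ext _ _ HA); tauto.
- apply (sa_ext _ _ (sa_full _ HS)); tauto.
Qed.

End SigmaAlgebra.

Lemma generated_sigma_algebra {X : Type} (G : set (set X)) : sigma_algebra (generated G).
Proof.
split.
- intros S HS _; apply (sa_full _ HS).
- intros A HA S HS HG; apply (sa_compl _ HS), HA; assumption.
- intros A HA S HS HG; apply (sa_union _ HS); intro n; apply HA; assumption.
Qed.

Lemma generated_incl {X : Type} (G : set (set X)) A : G A -> generated G A.
Proof. intros HA S HS HG; apply HG, HA. Qed.

Lemma borel_ext_gt r : borel_ext (ext_gt r).
Proof. apply generated_incl; exists r; reflexivity. Qed.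

Lemma borel_ext_le r : borel_ext (fun y => ~ ext_gt r y).
Proof. apply (sa_compl _ (generated_sigma_algebra _)), borel_ext_gt. Qed.

Lemma borel_R_gt r : borel_R (fun y => r < y).
Proof. apply generated_incl; exists r; reflexivity. Qed.

Lemma borel_R_interval r s : borel_R (fun y => r < y /\ y <= s).
Proof.
pose proof (generated_sigma_algebra (fun A => exists t : R, A = (fun x => t < x))) as H.
apply (sa_inter H); [apply borel_R_gt |].
apply (sa_compl_iff H (fun y => s < y)); [apply borel_R_gt | intro y; lra].
Qed.

Section Probability.
Variables (X : Type) (Sa : set (set X)) (P : set X -> R).
Hypothesis HP : probability Sa P.

Let HS := pr_sa _ _ HP.

Lemma prob_empty : P (fun _ => False) = 0.
Proof.
set (c := P (fun _ => False)).
assert (Hc : 0 <= c) by apply (pr_nonneg _ _ HP), (sa_empty HS).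
pose proof (pr_sigma_add _ _ HP (fun _ _ => False) (fun _ => sa_empty HS)
  (fun _ _ _ _ f _ => f)) as C; cbv beta in C.
replace (fun x : X => exists _ : nat, False) with (fun _ : X => False) in C
  by (apply set_ext; intro x; split; [tauto | intros [_ f]; exact f]).
assert (Hsum : forall N, sum_f_R0 (fun _ => c) N = INR (S N) * c).
{ induction N; [simpl; lra | rewrite tech5, IHN, (S_INR (S N)); lra]. }
destruct (Rle_lt_or_eq_dec _ _ Hc) as [h|h]; [exfalso | now symmetry].
destruct (C c h) as [N HN]; specialize (HN (S N) (Nat.le_succ_diag_r N)).
unfold R_dist in HN; rewrite Hsum, !S_INR in HN.
fold c in HN; pose proof (pos_INR N).
rewrite Rabs_right in HN by nra; nra.
Qed.

Lemma prob_union2 (A B : set X) : Sa A -> Sa B -> (forall x, A x -> B x -> False) ->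
  P (fun x => A x \/ B x) = P A + P B.
Proof.
intros HA HB D.
set (C := fun n => match n with O => A | 1%nat => B | _ => fun _ : X => False end).
assert (HC : forall n, Sa (C n)) by (intros [|[|n]]; [exact HA | exact HB | exact (sa_empty HS)]).
assert (DC : forall m n x, m <> n -> C m x -> C n x -> False).
{ intros [|[|m]] [|[|n]] x hmn; simpl; try tauto; try lia; eauto. }
pose proof (pr_sigma_add _ _ HP C HC DC) as L.
replace (fun x => exists n, C n x) with (fun x => A x \/ B x) in L.
2:{ apply set_ext; intro x; split.
    - intros [h|h]; [exists O | exists 1%nat]; exact h.
    - intros [[|[|n]] Hn]; simpl in Hn; tauto. }
apply (UL_sequence _ _ _ L); intros eps heps; exists 1%nat; intros n hn.
replace (sum_f_R0 (fun n => P (C n)) n) with (P A + P B).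
{ unfold R_dist; rewrite Rminus_diag, Rabs_R0; exact heps. }
induction n as [|n IH]; [lia |].
destruct n as [|n]; [reflexivity |].
rewrite tech5, <- IH by lia; simpl; rewrite prob_empty; ring.
Qed.

Lemma prob_compl (A : set X) : Sa A -> P (fun x => ~ A x) = 1 - P A.
Proof.
intro HA; rewrite <- (pr_full _ _ HP).
replace (fun _ : X => True) with (fun x => A x \/ ~ A x) by (apply set_ext; intro x; tauto).
rewrite prob_union2; [ring | exact HA | apply (sa_compl _ HS), HA | tauto].
Qed.

Lemma prob_mono (A B : set X) : Sa A -> Sa B -> (forall x, A x -> B x) -> P A <= P B.
Proof.
intros HA HB I.
assert (HBA : Sa (fun x => B x /\ ~ A x)) by (apply (sa_inter HS), (sa_compl _ HS); assumption).
replace B with (fun x => A x \/ (B x /\ ~ A x))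
  by (apply set_ext; intro x; pose proof (I x); tauto).
rewrite prob_union2 by (auto; tauto).
pose proof (pr_nonneg _ _ HP _ HBA); lra.
Qed.

Lemma prob_le_1 (A : set X) : Sa A -> P A <= 1.
Proof.
intro HA; rewrite <- (pr_full _ _ HP).
apply prob_mono; [exact HA | apply (sa_full _ HS) | tauto].
Qed.

Lemma prob_continuous_from_below (A : nat -> set X) :
  (forall n, Sa (A n)) -> (forall n x, A n x -> A (S n) x) ->
  Un_cv (fun n => P (A n)) (P (fun x => exists n, A n x)).
Proof.
intros HA Hinc.
assert (Hmono : forall m n x, (m <= n)%nat -> A m x -> A n x)
  by (intros m n x hmn; induction hmn; auto).
set (D := fun n => match n with O => A O | S n => fun x => A (S n) x /\ ~ A n x end).
assert (HD : forall n, Sa (D n))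
  by (intros [|n]; [apply HA | apply (sa_inter HS), (sa_compl _ HS); auto]).
assert (DD : forall m n x, (m < n)%nat -> D m x -> D n x -> False).
{ intros m [|n] x hmn hm hn; [lia |].
  apply (proj2 hn), (Hmono m); [lia | destruct m; [exact hm | exact (proj1 hm)]]. }
assert (AD : forall n x, A n x -> exists m, D m x).
{ intros n x; induction n as [|n IH]; intro h; [exists O; exact h |].
  destruct (classic (A n x)) as [h'|h']; [exact (IH h') | exists (S n); split; assumption]. }
assert (Hsum : forall n, sum_f_R0 (fun m => P (D m)) n = P (A n)).
{ induction n as [|n IH]; [reflexivity |].
  rewrite tech5, IH, <- prob_union2 by (auto; intros x h h'; exact (proj2 h' h)).
  f_equal; apply set_ext; intro x; split.
  - intros [h|h]; [auto | exact (proj1 h)].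
  - intro h; destruct (classic (A n x)); [left | right; simpl; split]; assumption. }
apply (Un_cv_ext _ _ Hsum).
replace (fun x => exists n, A n x) with (fun x => exists n, D n x).
- apply (pr_sigma_add _ _ HP D HD).
  intros m n x hmn; destruct (Nat.lt_gt_cases m n) as [[h|h] _]; eauto.
- apply set_ext; intro x; split.
  + intros [[|n] hn]; [exists O | exists (S n); apply hn]; exact hn.
  + intros [n hn]; exact (AD n x hn).
Qed.

End Probability.

Lemma ext_gt_le r s y : s <= r -> ext_gt r y -> ext_gt s y.
Proof. destruct y; simpl; lra. Qed.

Lemma Fbar_right_limit_0 (T : set ext -> R) : probability borel_ext T ->
  forall c, c < Fbar T 0 -> exists t, 0 < t /\ c < Fbar T t.
Proof.
intros HT c hc; unfold Fbar in *.
set (u := fun n : nat => / INR (S n)).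
assert (Hu : forall n, 0 < u n) by (intro n; apply Rinv_0_lt_compat, lt_0_INR; lia).
assert (Hinc : forall n y, ext_gt (u n) y -> ext_gt (u (S n)) y).
{ intros n y; apply ext_gt_le, Rinv_le_contravar; [apply lt_0_INR; lia | apply le_INR; lia]. }
pose proof (prob_continuous_from_below _ _ _ HT (fun n => ext_gt (u n))
  (fun n => borel_ext_gt (u n)) Hinc) as L; cbv beta in L.
replace (fun y => exists n, ext_gt (u n) y) with (ext_gt 0) in L.
2:{ apply set_ext; intros [x|]; simpl; split.
    - intro hx; destruct (archimed_cor1 x hx) as [N [hN hN0]]; exists (N - 1)%nat.
      unfold u; replace (S (N - 1)) with N by lia; exact hN.
    - intros [n hn]; exact (Rlt_trans _ _ _ (Hu n) hn).
    - intros _; exists O; exact I.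
    - intros _; exact I. }
destruct (L (T (ext_gt 0) - c)) as [N HN]; [lra |].
specialize (HN N (le_n N)); unfold R_dist in HN; apply Rabs_def2 in HN.
exists (u N); split; [apply Hu | lra].
Qed.

(* A countable parametrisation of the rationals. *)
Definition rat_of (n m d : nat) : R := (INR n - INR m) / INR (S d).

Lemma rat_of_between (a b : R) : a < b -> exists n m d, a < rat_of n m d < b.
Proof.
intro hab; destruct (archimed_cor1 (b - a)) as [N [HN HN0]]; [lra |].
assert (HNp : 0 < INR N) by (apply lt_0_INR; lia).
destruct (archimed (a * INR N)) as [h1 h2]; set (z := up (a * INR N)) in *.
exists (Z.to_nat z), (Z.to_nat (- z)), (N - 1)%nat; unfold rat_of.
replace (S (N - 1)) with N by lia.
rewrite (INR_IZR_INZ (Z.to_nat z)), (INR_IZR_INZ (Z.to_nat (- z))), <- minus_IZR.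
replace (Z.of_nat (Z.to_nat z) - Z.of_nat (Z.to_nat (- z)))%Z with z by lia.
assert (/ INR N * INR N < (b - a) * INR N) by (apply Rmult_lt_compat_r; assumption).
replace (/ INR N * INR N) with 1 in * by (field; lra).
split; apply Rmult_lt_reg_r with (INR N); try assumption;
  replace (IZR z / INR N * INR N) with (IZR z) by (field; lra); lra.
Qed.

Definition measurable_R {Om : Type} (F : set (set Om)) (Z : Om -> R) : Prop :=
  forall r, F (fun w => r < Z w).

Definition measurable_ext {Om : Type} (F : set (set Om)) (Z : Om -> ext) : Prop :=
  forall r, F (fun w => ext_gt r (Z w)).

Section Measurability.
Variables (Om : Type) (F : set (set Om)).
Hypothesis HF : sigma_algebra F.

Lemma sa_rat_union (Q : R -> set Om) (B : set Om) : (forall r, F (Q r)) ->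
  (forall w, (exists n m d, Q (rat_of n m d) w) <-> B w) -> F B.
Proof.
intros HQ; apply sa_ext.
apply (sa_union _ HF (fun n w => exists m d, Q (rat_of n m d) w)); intro n.
apply (sa_union _ HF (fun m w => exists d, Q (rat_of n m d) w)); intro m.
apply (sa_union _ HF (fun d w => Q (rat_of n m d) w)); intro d.
apply HQ.
Qed.

Lemma measurable_R_lt (Z : Om -> R) r : measurable_R F Z -> F (fun w => Z w < r).
Proof.
intro hZ; apply (sa_rat_union (fun q w => q < r /\ ~ q < Z w)).
- intro q; apply (sa_inter HF); [apply (sa_prop HF) | apply (sa_compl _ HF), hZ].
- intro w; split.
  + intros [n [m [d hq]]]; lra.
  + intro hw; destruct (rat_of_between (Z w) r hw) as [n [m [d hq]]]; exists n, m, d; lra.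
Qed.

Lemma measurable_R_const c : measurable_R F (fun _ => c).
Proof. intro r; apply (sa_prop HF). Qed.

Lemma measurable_R_plus (Z1 Z2 : Om -> R) : measurable_R F Z1 -> measurable_R F Z2 ->
  measurable_R F (fun w => Z1 w + Z2 w).
Proof.
intros h1 h2 r; apply (sa_rat_union (fun q w => q < Z1 w /\ r - q < Z2 w)).
- intro q; apply (sa_inter HF); [apply h1 | apply h2].
- intro w; split.
  + intros [n [m [d hq]]]; lra.
  + intro hw; destruct (rat_of_between (r - Z2 w) (Z1 w)) as [n [m [d hq]]]; [lra |].
    exists n, m, d; lra.
Qed.

Lemma measurable_R_sumR (Zk : nat -> Om -> R) k : (forall j, measurable_R F (Zk j)) ->
  measurable_R F (fun w => sumR k (fun j => Zk j w)).
Proof.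
intro h; induction k as [|k IH]; simpl;
  [apply measurable_R_const | apply measurable_R_plus; auto].
Qed.

Lemma measurable_R_sub_l t (Z : Om -> R) : measurable_R F Z -> measurable_R F (fun w => t - Z w).
Proof.
intros h r; apply (sa_ext _ _ (measurable_R_lt Z (t - r) h)); intro w; lra.
Qed.

Lemma measurable_ext_gt_R (X : Om -> ext) (Y : Om -> R) :
  measurable_ext F X -> measurable_R F Y -> F (fun w => ext_gt (Y w) (X w)).
Proof.
intros hX hY; apply (sa_rat_union (fun q w => Y w < q /\ ext_gt q (X w))).
- intro q; apply (sa_inter HF); [apply measurable_R_lt, hY | apply hX].
- intro w; split.
  + intros [n [m [d [hq1 hq2]]]]; destruct (X w); simpl in *; [lra | exact I].
  + destruct (X w) as [x|]; simpl; intro hw.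
    * destruct (rat_of_between (Y w) x hw) as [n [m [d hq]]]; exists n, m, d; exact hq.
    * destruct (rat_of_between (Y w) (Y w + 1)) as [n [m [d hq]]]; [lra |].
      exists n, m, d; split; [lra | exact I].
Qed.

Lemma measurable_ext_finite (X : Om -> ext) : measurable_ext F X -> F (fun w => X w <> None).
Proof.
intro hX; apply (sa_rat_union (fun q w => ~ ext_gt q (X w))).
- intro q; apply (sa_compl _ HF), hX.
- intro w; destruct (X w) as [x|]; simpl; split.
  + intros _; discriminate.
  + intros _; destruct (rat_of_between x (x + 1)) as [n [m [d hq]]]; [lra |].
    exists n, m, d; lra.
  + intros [n [m [d hq]]]; contradiction.
  + intro h; contradiction.
Qed.

Lemma measurable_Ttilde_gt (Tk : nat -> Om -> ext) (Rk : nat -> Om -> R) t :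
  (forall k, measurable_ext F (Tk k)) -> (forall k, measurable_R F (Rk k)) ->
  F (Ttilde_gt Tk Rk t).
Proof.
intros hT hR.
apply (sa_ext (fun w => exists k,
  (forall j, (j < k)%nat -> ext_gt (Rk j w) (Tk j w)) /\ ~ ext_gt (Rk k w) (Tk k w) /\
  Tk k w <> None /\ ext_gt (t - sumR k (fun j => Rk j w)) (Tk k w))).
- apply (sa_union _ HF); intro k.
  repeat apply (sa_inter HF).
  + apply (sa_inter_count HF); intro j.
    apply (sa_impl HF), measurable_ext_gt_R; auto.
  + apply (sa_compl _ HF), measurable_ext_gt_R; auto.
  + apply measurable_ext_finite; auto.
  + apply measurable_ext_gt_R, measurable_R_sub_l, measurable_R_sumR; auto.
- intro w; unfold Ttilde_gt, stop_event; split.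
  + intros [k [h1 [h2 [h3 h4]]]]; exists k.
    destruct (Tk k w); simpl in *; [repeat split; auto; lra | congruence].
  + intros [k [[h1 h2] h3]]; exists k.
    destruct (Tk k w); simpl in *; [repeat split; auto; try lra; discriminate | contradiction].
Qed.

End Measurability.

Section RestartBound.
Variables (Om : Type) (F : set (set Om)) (P : set Om -> R).
Variables (Tk : nat -> Om -> ext) (Rk : nat -> Om -> R).
Variables (T : set ext -> R) (mu t : R).
Hypothesis HP : probability F P.
Hypothesis Hlaw : forall k, has_law F P borel_ext (Tk k) T.
Hypothesis Hexp : forall k, is_exponential F P mu (Rk k).
Hypothesis Hind : indep_family P Tk Rk.
Hypothesis Ht : 0 <= t.

Let HF := pr_sa _ _ HP.

Let a := Fbar T t.
Let b := Fbar T 0.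
Let e := exp (- (mu * t)).

Lemma measurable_Rk k : measurable_R F (Rk k).
Proof. intro r; exact (proj1 (Hexp k) _ (borel_R_gt r)). Qed.

Lemma measurable_Tk k : measurable_ext F (Tk k).
Proof. intro r; exact (proj1 (Hlaw k) _ (borel_ext_gt r)). Qed.

Lemma measurable_Rk_le k r : F (fun w => Rk k w <= r).
Proof. apply (sa_compl_iff HF (fun w => r < Rk k w)); [apply measurable_Rk | intro w; lra]. Qed.

Lemma measurable_Tk_le k r : F (fun w => ~ ext_gt r (Tk k w)).
Proof. exact (proj1 (Hlaw k) _ (borel_ext_le r)). Qed.

Lemma prob_Rk_gt k r : 0 <= r -> P (fun w => r < Rk k w) = exp (- (mu * r)).
Proof. apply (proj2 (proj2 (Hexp k))). Qed.

Lemma prob_Rk_pos k : P (fun w => 0 < Rk k w) = 1.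
Proof. rewrite prob_Rk_gt, Rmult_0_r, Ropp_0, exp_0 by lra; reflexivity. Qed.

Lemma prob_Rk_interval k : P (fun w => 0 < Rk k w /\ Rk k w <= t) = 1 - e.
Proof.
rewrite <- (prob_Rk_pos k); unfold e; rewrite <- (prob_Rk_gt k t Ht).
replace (fun w => 0 < Rk k w) with (fun w => (0 < Rk k w /\ Rk k w <= t) \/ t < Rk k w).
- rewrite (prob_union2 _ _ _ HP); [ring | | apply measurable_Rk | intros w h1 h2; lra].
  apply (sa_inter HF); [apply measurable_Rk | apply measurable_Rk_le].
- apply set_ext; intro w; split; [intros [h|h]; lra | intro h].
  destruct (Rle_or_lt (Rk k w) t); [left | right]; lra.
Qed.

Lemma law_T_le r : T (fun y => ~ ext_gt r y) = 1 - Fbar T r.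
Proof.
unfold Fbar; rewrite <- (proj2 (Hlaw O) _ (borel_ext_le r)), <- (proj2 (Hlaw O) _ (borel_ext_gt r)).
exact (prob_compl _ _ _ HP _ (proj1 (Hlaw O) _ (borel_ext_gt r))).
Qed.

Local Ltac solve_measurable :=
  repeat first [apply measurable_Rk | apply measurable_Tk | apply measurable_Rk_le
               | apply measurable_Tk_le | apply (sa_union2 HF) | apply (sa_inter HF)].

Lemma indep_one (A : set ext) (B : set R) : borel_ext A -> borel_R B ->
  P (fun w => A (Tk 0 w) /\ B (Rk 0 w)) = T A * P (fun w => B (Rk 0 w)).
Proof.
intros hA hB.
pose proof (Hind 1%nat (fun _ => A) (fun _ => B) (fun _ => hA) (fun _ => hB)) as I; simpl in I.
rewrite (proj2 (Hlaw O) A hA), Rmult_1_l in I; rewrite <- I.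
f_equal; apply set_ext; intro w; split.
- intros h k hk; replace k with 0%nat by lia; exact h.
- intro h; apply h; lia.
Qed.

Lemma indep_two (A0 A1 : set ext) (B0 B1 : set R) :
  borel_ext A0 -> borel_ext A1 -> borel_R B0 -> borel_R B1 ->
  P (fun w => (A0 (Tk 0 w) /\ B0 (Rk 0 w)) /\ (A1 (Tk 1 w) /\ B1 (Rk 1 w))) =
  T A0 * P (fun w => B0 (Rk 0 w)) * (T A1 * P (fun w => B1 (Rk 1 w))).
Proof.
intros hA0 hA1 hB0 hB1.
set (A := fun k => match k with O => A0 | _ => A1 end).
set (B := fun k => match k with O => B0 | _ => B1 end).
assert (hA : forall k, borel_ext (A k)) by (intros [|k]; assumption).
assert (hB : forall k, borel_R (B k)) by (intros [|k]; assumption).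
pose proof (Hind 2%nat A B hA hB) as I; simpl in I.
rewrite (proj2 (Hlaw O) A0 hA0), (proj2 (Hlaw 1%nat) A1 hA1), Rmult_1_l in I; rewrite <- I.
f_equal; apply set_ext; intro w; split.
- intros h [|[|k]] hk; [exact (proj1 h) | exact (proj2 h) | lia].
- intro h; split; [apply (h 0%nat) | apply (h 1%nat)]; lia.
Qed.

Definition early_stop (w : Om) : Prop :=
  (~ ext_gt t (Tk 0 w) /\ t < Rk 0 w) \/
  (~ ext_gt 0 (Tk 0 w) /\ (0 < Rk 0 w /\ Rk 0 w <= t)) \/
  ((ext_gt t (Tk 0 w) /\ (0 < Rk 0 w /\ Rk 0 w <= t)) /\ (~ ext_gt 0 (Tk 1 w) /\ 0 < Rk 1 w)).

Lemma early_stop_not_Ttilde_gt w : early_stop w -> ~ Ttilde_gt Tk Rk t w.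
Proof.
intros hw [k [[hprev hstop] hgt]].
destruct k as [|[|k]]; [| pose proof (hprev 0%nat ltac:(lia)) |
  pose proof (hprev 0%nat ltac:(lia)); pose proof (hprev 1%nat ltac:(lia))];
  unfold early_stop in hw; simpl in *;
  destruct (Tk 0 w); destruct (Tk 1 w); simpl in *; intuition lra.
Qed.

Lemma measurable_early_stop : F early_stop.
Proof.
unfold early_stop; solve_measurable.
Qed.

Lemma prob_early_stop :
  P early_stop = (1 - a) * e + (1 - b) * (1 - e) + a * (1 - e) * (1 - b).
Proof.
assert (hI : borel_R (fun y => 0 < y /\ y <= t)) by apply borel_R_interval.
pose proof (indep_one _ _ (borel_ext_le t) (borel_R_gt t)) as P1.
pose proof (indep_one _ _ (borel_ext_le 0) hI) as P2.
pose proof (indep_two _ _ _ _ (borel_ext_gt t) (borel_ext_le 0) hI (borel_R_gt 0)) as P3.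
cbv beta in P1, P2, P3.
unfold early_stop; rewrite !(prob_union2 _ _ _ HP).
1: { rewrite P1, P2, P3, !law_T_le, prob_Rk_gt, !prob_Rk_interval, prob_Rk_pos by exact Ht.
     unfold a, b, e, Fbar; ring. }
all: try (intros w h1 h2; destruct (Tk 0%nat w); simpl in *; intuition lra).
all: solve_measurable.
Qed.

Lemma Ttilde_gt_tail_bound : P (Ttilde_gt Tk Rk t) <= a * e + (1 - e) * (b - a * (1 - b)).
Proof.
replace (a * e + (1 - e) * (b - a * (1 - b))) with (1 - P early_stop)
  by (rewrite prob_early_stop; ring).
rewrite <- (prob_compl _ _ _ HP _ measurable_early_stop).
apply (prob_mono _ _ _ HP).
- apply measurable_Ttilde_gt; [exact HF | apply measurable_Tk | apply measurable_Rk].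
- apply (sa_compl _ HF), measurable_early_stop.
- intros w hw hstop; exact (early_stop_not_Ttilde_gt w hstop hw).
Qed.

End RestartBound.

Theorem mainTheorem13 (T : set ext -> R)
  (HT : law_on_0_inf T)
  (Hpos : 0 < Fbar T 0)
  (Hsupp : inf_support_is_0 T)
  (Hst : forall mu : R, 0 < mu ->
     exists (Om : Type) (F : set (set Om)) (P : set Om -> R)
            (Tk : nat -> Om -> ext) (Rk : nat -> Om -> R),
       probability F P /\
       (forall k, has_law F P borel_ext (Tk k) T) /\
       (forall k, is_exponential F P mu (Rk k)) /\
       indep_family P Tk Rk /\
       (forall t, 0 <= t -> P (Ttilde_gt Tk Rk t) >= Fbar T t)) :
  Fbar T 0 = 1.
Proof.
destruct HT as [HTp _].
assert (Hb1 : Fbar T 0 <= 1) by exact (prob_le_1 _ _ _ HTp _ (borel_ext_gt 0)).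
set (b := Fbar T 0) in *.
destruct (Rle_lt_or_eq_dec _ _ Hb1) as [Hb | Hb]; [exfalso | exact Hb].
destruct (Fbar_right_limit_0 T HTp (b / (2 - b))) as [t [Ht Hta]].
{ apply Rmult_lt_reg_r with (2 - b); [lra |].
  unfold Rdiv; rewrite Rmult_assoc, Rinv_l, Rmult_1_r by lra; fold b; nra. }
set (a := Fbar T t) in *.
assert (Hab : b < a * (2 - b)).
{ apply (Rmult_lt_compat_r (2 - b)) in Hta; [| lra].
  unfold Rdiv in Hta; rewrite Rmult_assoc, Rinv_l, Rmult_1_r in Hta by lra; exact Hta. }
destruct (Hst 1 Rlt_0_1) as [Om [F [P [Tk [Rk [HP [Hlaw [Hexp [Hind Hge]]]]]]]]].
pose proof (Ttilde_gt_tail_bound Om F P Tk Rk T 1 t HP Hlaw Hexp Hind (Rlt_le _ _ Ht)) as Hup.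
specialize (Hge t (Rlt_le _ _ Ht)); fold a b in Hup, Hge.
assert (He : exp (- (1 * t)) < exp 0) by (apply exp_increasing; lra).
rewrite exp_0 in He; set (e := exp (- (1 * t))) in *.
assert (0 < (1 - e) * (a * (2 - b) - b)) by (apply Rmult_lt_0_compat; lra).
nra.
Qed.
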